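(* Let $H$ be a real or complex Hilbert space of dimension $n$, let $N\ge n$, let $F=\{f_i\}_{i=1}^N$ be a frame for $H$ with frame operator $S_F$, and let $\{q_i\}_{i=1}^N$ be the weight number sequence. Set $c=\max\{q_i\|S_F^{-1/2}f_i\|^2:1\le i\le N\}$, $\Upsilon_1=\{i: q_i\|S_F^{-1/2}f_i\|^2=c\}$, $\Upsilon_2=\{1,\dots,N\}\setminus\Upsilon_1$, and $H_j=\operatorname{span}\{f_i: i\in\Upsilon_j\}$ for $j=1,2$. If $H_1\cap H_2=\{0\}$, then the canonical dual $\{S_F^{-1}f_i\}_{i=1}^N$ is a 1-erasure probabilistic spectrally optimal dual of $F$.
   Context: Inner products are linear in the first argument. A frame for the $n$-dimensional space $H$ is a finite sequence spanning $H$. Analysis operator: $\Theta_F f=(\langle f,f_i\rangle)_i$. Synthesis operator: $\Theta_F^*(c)=\sum_i c_if_i$. Frame operator: $S_F=\Theta_F^*\Theta_F$, which is positive and invertible. A dual frame of $F$ is a frame $G=\{g_i\}_{i=1}^N$ with $f=\sum_i\langle f,f_i\rangle g_i=\sum_i\langle f,g_i\rangle f_i$ for all $f\in H$. A probability sequence $\{p_i\}_{i=1}^N$ satisfies $0\le p_i\le1$ and $\sum p_i=1$. The weight numbers are $q_i=\frac{\sum_j p_j}{\sum_j p_j-p_i}\cdot\frac{N-1}{n}$ (assumed well defined). $\mathcal{D}_1^p$ is the set of $N\times N$ diagonal matrices having exactly one nonzero diagonal entry, that entry being $q_i$ in position $(i,i)$. $\mathcal{R}_1^p(F,G)=\max\{\rho(\Theta_G^*D\Theta_F):D\in\mathcal{D}_1^p\}$,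 where $\rho$ is spectral radius. A dual $G$ of $F$ is a 1-erasure probabilistic spectrally optimal dual of $F$ if $\mathcal{R}_1^p(F,G)=\inf\{\mathcal{R}_1^p(F,G'): G' \text{ a dual frame of } F\}$. *)

From HB Require Import structures.
From mathcomp Require Import all_boot all_order all_algebra.
Set Implicit Arguments. Unset Strict Implicit. Unset Printing Implicit Defensive.
Import Order.TTheory GRing.Theory Num.Theory.
Local Open Scope ring_scope.

(* H is modelled as K^n (column vectors) inside C^n, C a numeric closed field
   (e.g. the complex numbers); K = C (complex case) or K = real elements of C
   (real case, when realcase = true). *)
Section Frames.
Variable C : numClosedFieldType.

Definition adjmx m n (A : 'M[C]_(m, n)) : 'M[C]_(n, m) := (map_mx Num.conj A)^T.

(* inner product, linear in the first argument: <x,y> = y^* x *)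
Definition inner n (x y : 'cV[C]_n) : C := (adjmx y *m x) 0 0.

Definition in_space (realcase : bool) n (x : 'cV[C]_n) : Prop :=
  realcase -> forall j, x j 0 \is Num.real.

Definition span_of n N (f : 'I_N -> 'cV[C]_n) (A : {set 'I_N}) : 'M[C]_n :=
  (\sum_(i in A) <<(f i)^T>>)%MS.

Definition is_frame (realcase : bool) n N (f : 'I_N -> 'cV[C]_n) : Prop :=
  (forall i, in_space realcase (f i)) /\ (1%:M <= span_of f setT)%MS.

(* analysis operator Theta_F x = (<x, f_i>)_i *)
Definition analysis n N (f : 'I_N -> 'cV[C]_n) : 'M[C]_(N, n) :=
  \matrix_(i < N, j < n) (f i j 0)^*.

Definition synthesis n N (f : 'I_N -> 'cV[C]_n) : 'M[C]_(n, N) :=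
  adjmx (analysis f).

Definition frame_op n N (f : 'I_N -> 'cV[C]_n) : 'M[C]_n :=
  synthesis f *m analysis f.

Definition is_dual (realcase : bool) n N (f g : 'I_N -> 'cV[C]_n) : Prop :=
  is_frame realcase g /\
  forall x, in_space realcase x ->
    x = \sum_i inner x (f i) *: g i /\ x = \sum_i inner x (g i) *: f i.

Definition prob_seq N (p : 'I_N -> C) : Prop :=
  (forall i, 0 <= p i <= 1) /\ \sum_i p i = 1.

Definition weight n N (p : 'I_N -> C) (i : 'I_N) : C :=
  (\sum_j p j) / (\sum_j p j - p i) * ((N%:R - 1) / n%:R).

Definition Dmat n N (p : 'I_N -> C) (i : 'I_N) : 'M[C]_N :=
  \matrix_(j, k) (if (j == i) && (k == i) then weight n p i else 0).

Definition spectrum n (A : 'M[C]_n) : seq C :=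
  sval (closed_field_poly_normal (char_poly A)).

Lemma spectrumE n (A : 'M[C]_n) a : eigenvalue A a = (a \in spectrum A).
Proof.
rewrite /spectrum; case: (closed_field_poly_normal (char_poly A)) => rs /= Hrs.
rewrite (monicP (char_poly_monic A)) scale1r in Hrs.
by rewrite eigenvalue_root_char Hrs root_prod_XsubC.
Qed.

Definition spec_rad n (A : 'M[C]_n) : C := \big[Num.max/0]_(a <- spectrum A) `|a|.

Definition R1p n N (p : 'I_N -> C) (f g : 'I_N -> 'cV[C]_n) : C :=
  \big[Num.max/0]_(i < N) spec_rad (synthesis g *m Dmat n p i *m analysis f).

(* G is a 1-erasure probabilistic spectrally optimal dual of F:
   G is a dual and R_1^p(F,G) is the infimum of R_1^p(F,G') over duals G'
   (i.e. it is attained at G: a lower bound belonging to the set). *)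
Definition prob_spec_opt_dual (realcase : bool) n N (p : 'I_N -> C)
    (f g : 'I_N -> 'cV[C]_n) : Prop :=
  is_dual realcase f g /\
  forall g', is_dual realcase f g' -> R1p p f g <= R1p p f g'.

Definition is_pos_sqrt n (T M : 'M[C]_n) : Prop :=
  adjmx T = T /\ (forall x : 'cV[C]_n, 0 <= inner (T *m x) x) /\ T *m T = M.

End Frames.

(* Write g_i = S^-1 f_i for the canonical dual.  The erasure operator
   Theta_G^* D_i Theta_F = q_i g_i f_i^* has rank one, so its spectral radius is
   |q_i <g_i, f_i>|; for the canonical dual this is q_i ||S^-1/2 f_i||^2, whence
   R_1^p(F, canonical) = c.  For any other dual G', the differences h_i = g'_i - g_i
   satisfy sum_i f_i h_i^* = 0.  The part of this sum over Upsilon_1 has range in H_1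
   and equals minus the part over Upsilon_2, with range in H_2; as H_1 and H_2 meet
   trivially it vanishes, and taking traces gives
   sum_{i in Upsilon_1} <g'_i, f_i> = sum_{i in Upsilon_1} <g_i, f_i>.  Since
   q_i <g_i, f_i> = c on Upsilon_1, some i in Upsilon_1 has q_i |<g'_i, f_i>| >= c,
   and that number is the spectral radius of the i-th erasure operator of G'. *)

From HB Require Import structures.
From mathcomp Require Import all_boot all_order all_algebra.
Set Implicit Arguments. Unset Strict Implicit. Unset Printing Implicit Defensive.
Import Order.TTheory GRing.Theory Num.Theory.
Local Open Scope ring_scope.

Section NonnegBigmax.
Variables (R : numDomainType) (I : eqType) (F : I -> R).
Hypothesis F_ge0 : forall i, 0 <= F i.

Lemma bigmax_nneg_ge0 (r : seq I) : 0 <= \big[Num.max/0]_(i <- r) F i.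
Proof.
elim/big_ind: _ => // x y x0 y0.
by rewrite comparable_le_max ?x0 // real_comparable ?ger0_real.
Qed.

Lemma le_bigmax_nneg (r : seq I) i : i \in r -> F i <= \big[Num.max/0]_(j <- r) F j.
Proof.
elim: r => // a r IH; rewrite in_cons big_cons.
rewrite comparable_le_max ?real_comparable ?ger0_real ?bigmax_nneg_ge0 //.
by case/orP => [/eqP-> | /IH ->]; rewrite ?lexx ?orbT.
Qed.

Lemma bigmax_nneg_attained (r : seq I) :
  \big[Num.max/0]_(i <- r) F i = 0 \/
  exists2 i, i \in r & \big[Num.max/0]_(j <- r) F j = F i.
Proof.
elim: r => [|a r IH]; first by left; rewrite big_nil.
rewrite big_cons.
case: real_leP; rewrite ?ger0_real ?bigmax_nneg_ge0 // => _.
- case: IH => [->|[i ir ->]]; first by left.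
  by right; exists i; rewrite // in_cons ir orbT.
- by right; exists a; rewrite ?mem_head.
Qed.

End NonnegBigmax.

Lemma exists_weighted_norm_ge (R : numDomainType) (I : finType) (U : {set I})
    (q w z : I -> R) (c : R) i0 :
  i0 \in U -> 0 < c -> (forall i, 0 <= q i) -> (forall i, 0 <= w i) ->
  (forall i, i \in U -> q i * w i = c) ->
  \sum_(i in U) z i = \sum_(i in U) w i ->
  exists2 i, i \in U & c <= q i * `|z i|.
Proof.
move=> i0U c0 q0 w0 qwc zw; apply/exists_inP; apply: contraT => /exists_inPn zlt.
have zw_lt i : i \in U -> `|z i| < w i.
  move=> iU; have qi0 : 0 < q i.
    rewrite lt_def q0 andbT; apply: contraTneq c0 => qi0.
    by rewrite -(qwc i iU) qi0 mul0r ltxx.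
  rewrite -(ltr_pM2l qi0) qwc // real_ltNge ?zlt //.
  - by rewrite ger0_real // mulr_ge0.
  - exact: gtr0_real.
have := ler_norm_sum (index_enum I) z (mem U).
rewrite zw ger0_norm ?sumr_ge0 // => le_sum.
have U_has : has (mem U) (index_enum I) by apply/hasP; exists i0; rewrite ?mem_index_enum.
by have := le_lt_trans le_sum (ltr_sum U_has zw_lt); rewrite ltxx.
Qed.

Lemma eigenvalue_trmx (F : fieldType) n (A : 'M[F]_n) a :
  eigenvalue A^T a = eigenvalue A a.
Proof.
rewrite /eigenvalue /eigenspace !kermx_eq0 !row_free_unit -unitmx_tr.
by rewrite linearB /= tr_scalar_mx trmxK.
Qed.

Lemma eigenvalue_colP (F : fieldType) n (A : 'M[F]_n) a :
  reflect (exists2 x : 'cV_n, A *m x = a *: x & x != 0) (eigenvalue A a).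
Proof.
rewrite -eigenvalue_trmx; apply: (iffP eigenvalueP) => -[x Ax x0].
  by exists x^T; rewrite ?trmx_eq0 // -[A]trmxK -trmx_mul Ax linearZ.
by exists x^T; rewrite ?trmx_eq0 // -trmx_mul Ax linearZ.
Qed.

Section Adjoint.
Variable C : numClosedFieldType.

Lemma adjmxE m n (A : 'M[C]_(m, n)) i j : adjmx A i j = (A j i)^*.
Proof. by rewrite !mxE. Qed.

Lemma adjmxK m n (A : 'M[C]_(m, n)) : adjmx (adjmx A) = A.
Proof. by apply/matrixP => i j; rewrite !adjmxE conjCK. Qed.

Lemma adjmxM m n k (A : 'M[C]_(m, n)) (B : 'M[C]_(n, k)) :
  adjmx (A *m B) = adjmx B *m adjmx A.
Proof. by rewrite /adjmx map_mxM trmx_mul. Qed.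

Lemma adjmxB m n (A B : 'M[C]_(m, n)) : adjmx (A - B) = adjmx A - adjmx B.
Proof. by apply/matrixP => i j; rewrite !mxE rmorphB. Qed.

Lemma adjmx_inv n (A : 'M[C]_n) : adjmx (invmx A) = invmx (adjmx A).
Proof. by rewrite /adjmx map_invmx trmx_inv. Qed.

Lemma inner_conj n (x y : 'cV[C]_n) : (inner x y)^* = inner y x.
Proof. by rewrite /inner -[in RHS](adjmxK y) -adjmxM adjmxE. Qed.

Lemma innerBl n (x y z : 'cV[C]_n) : inner (x - y) z = inner x z - inner y z.
Proof. by rewrite /inner mulmxBr !mxE. Qed.

Lemma inner_ge0 n (x : 'cV[C]_n) : 0 <= inner x x.
Proof.
by rewrite /inner mxE sumr_ge0 // => j _; rewrite adjmxE mulrC mul_conjC_ge0.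
Qed.

Lemma mxtrace_outer n (u w : 'cV[C]_n) : \tr (u *m adjmx w) = inner u w.
Proof. by rewrite mxtrace_mulC /mxtrace big_ord1. Qed.

Lemma mul_cV_mx11 n (u : 'cV[C]_n) (a : 'M[C]_1) : u *m a = a 0 0 *: u.
Proof. by rewrite {1}[a]mx11_scalar mul_mx_scalar. Qed.

Lemma sum_inner_scale N n (x : 'cV[C]_n) (h k : 'I_N -> 'cV[C]_n) :
  \sum_i inner x (h i) *: k i = (\sum_i k i *m adjmx (h i)) *m x.
Proof. by rewrite mulmx_suml; apply: eq_bigr => i _; rewrite -mulmxA mul_cV_mx11. Qed.

Lemma synthesis_mul_analysis n N (g f : 'I_N -> 'cV[C]_n) :
  synthesis g *m analysis f = \sum_i g i *m adjmx (f i).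
Proof.
apply/matrixP => j k; rewrite !mxE summxE; apply: eq_bigr => i _.
by rewrite !adjmxE !mxE big_ord1 adjmxE conjCK.
Qed.

Lemma synthesis_Dmat_analysis n N (p : 'I_N -> C) (g f : 'I_N -> 'cV[C]_n) i :
  synthesis g *m Dmat n p i *m analysis f = weight n p i *: (g i *m adjmx (f i)).
Proof.
apply/matrixP => j k; rewrite !mxE (bigD1 i) //= big1 ?addr0 => [|l li]; last first.
  by rewrite !mxE big1 ?mul0r // => m _; rewrite !mxE (negbTE li) andbF mulr0.
rewrite !mxE (bigD1 i) //= big1 ?addr0 => [|m mi]; last first.
  by rewrite !mxE (negbTE mi) eqxx /= mulr0.
rewrite big_ord1 !adjmxE !mxE !eqxx /= conjCK.
by rewrite [_ * weight _ _ _]mulrC mulrA.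
Qed.

End Adjoint.

Section SpectralRadius.
Variables (C : numClosedFieldType) (n : nat).
Implicit Types (A : 'M[C]_n) (u w : 'cV[C]_n).

Lemma spec_rad_ge0 A : 0 <= spec_rad A.
Proof. exact/bigmax_nneg_ge0/normr_ge0. Qed.

Lemma le_spec_rad A a : eigenvalue A a -> `|a| <= spec_rad A.
Proof. by rewrite spectrumE; apply: le_bigmax_nneg. Qed.

Lemma spec_rad_le A b :
  0 <= b -> (forall a, eigenvalue A a -> `|a| <= b) -> spec_rad A <= b.
Proof.
move=> b0 Ab; rewrite /spec_rad big_seq; apply: bigmax_le => // a.
by rewrite -spectrumE; apply: Ab.
Qed.

Lemma eigenvalue_rank1 (q : C) u w a :
  eigenvalue (q *: (u *m adjmx w)) a -> a = 0 \/ a = q * inner u w.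
Proof.
case/eigenvalue_colP => x Ax x0; have [->|a0] := eqVneq a 0; [by left | right].
set s := inner x w.
have ax : a *: x = (q * s) *: u.
  by rewrite -Ax -scalemxAl -mulmxA mul_cV_mx11 scalerA.
have s0 : s != 0.
  apply: contraNneq x0 => s0.
  by move: ax; rewrite s0 mulr0 scale0r => /eqP; rewrite scaler_eq0 (negbTE a0).
have := congr1 (fun M => (adjmx w *m M) 0 0) ax.
rewrite /= -!scalemxAr ![((_ *: _ : 'M[C]_1) 0 0)]mxE -/s -/(inner u w) mulrAC.
exact: (mulIf s0).
Qed.

Lemma spec_rad_rank1 (q : C) u w :
  spec_rad (q *: (u *m adjmx w)) = `|q * inner u w|.
Proof.
apply/le_anti/andP; split.
  apply: spec_rad_le => // a /eigenvalue_rank1 [|] ->; rewrite ?normr0 //.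
have [->|u0] := eqVneq u 0.
  by rewrite /inner mulmx0 mxE mulr0 normr0 spec_rad_ge0.
apply/le_spec_rad/eigenvalue_colP; exists u => //.
by rewrite -scalemxAl -mulmxA mul_cV_mx11 scalerA.
Qed.

End SpectralRadius.

Section FrameOperator.
Variables (C : numClosedFieldType) (n N : nat) (f : 'I_N -> 'cV[C]_n).

Lemma frame_opE : frame_op f = \sum_i f i *m adjmx (f i).
Proof. exact: synthesis_mul_analysis. Qed.

Lemma adjmx_frame_op : adjmx (frame_op f) = frame_op f.
Proof. by rewrite /frame_op adjmxM /synthesis adjmxK. Qed.

Lemma frame_op_quad (v : 'rV[C]_n) :
  (v *m frame_op f *m adjmx v) 0 0 = \sum_i `|(v *m f i) 0 0| ^+ 2.
Proof.
rewrite frame_opE mulmx_sumr mulmx_suml summxE; apply: eq_bigr => i _.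
by rewrite mulmxA -mulmxA -adjmxM mxE big_ord1 adjmxE normCK.
Qed.

Lemma span_of_ann (x : 'cV[C]_n) :
  (1%:M <= span_of f setT)%MS -> (forall i, (f i)^T *m x = 0) -> x = 0.
Proof.
move=> f_full fx0; have : (span_of f setT <= kermx x)%MS.
  by apply/sumsmx_subP => i _; rewrite genmxE; apply/sub_kermxP.
by move/(submx_trans f_full)/sub_kermxP; rewrite mul1mx.
Qed.

Lemma frame_op_unit : (1%:M <= span_of f setT)%MS -> frame_op f \in unitmx.
Proof.
move=> f_full; rewrite -row_free_unit -kermx_eq0; apply/eqP/row_matrixP => j.
set v := row j _; have vS : v *m frame_op f = 0 by rewrite -row_mul mulmx_ker row0.
have : (v *m frame_op f *m adjmx v) 0 0 = 0 by rewrite vS mul0mx mxE.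
rewrite frame_op_quad => /eqP; rewrite psumr_eq0 => [/allP vf0|i _]; last exact: exprn_ge0.
rewrite row0; apply: trmx_inj; rewrite trmx0; apply: span_of_ann f_full _ => i.
have := vf0 i (mem_index_enum i); rewrite sqrf_eq0 normr_eq0 => /eqP vfi0.
by rewrite -trmx_mul [v *m f i]mx11_scalar vfi0 raddf0 trmx0.
Qed.

End FrameOperator.

Section RealMatrices.
Variable C : numClosedFieldType.

Lemma in_space_realmx n (x : 'cV[C]_n) :
  (forall j, x j 0 \is Num.real) <-> x \is a realmx.
Proof.
split=> [xr | /mxOverP xr j]; last exact: xr.
by apply/mxOverP => j k; rewrite ord1.
Qed.

Lemma invmx_realmx n (A : 'M[C]_n) : A \is a realmx -> invmx A \is a realmx.
Proof.
move=> Ar; have Aconj : map_mx Num.conj (invmx A) = invmx A by rewrite map_invmx realmxC.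
by apply/mxOverP => i j; rewrite CrealE -{2}Aconj mxE.
Qed.

Lemma frame_op_realmx n N (f : 'I_N -> 'cV[C]_n) :
  (forall i, f i \is a realmx) -> frame_op f \is a realmx.
Proof.
move=> fr; apply: mxOverM; apply/mxOverP => i j; rewrite !mxE ?conjCK;
  by rewrite ?conj_Creal (mxOverP (fr _)).
Qed.

End RealMatrices.

Lemma span_of_mull (C : numClosedFieldType) n N (f : 'I_N -> 'cV[C]_n) (B : 'M[C]_n) :
  B \in unitmx -> (1%:M <= span_of f setT)%MS ->
  (1%:M <= span_of (fun i => B *m f i) setT)%MS.
Proof.
move=> Bu f_full; have BT_full : (1%:M <= B^T)%MS by rewrite sub1mx row_full_unit unitmx_tr.
apply: submx_trans BT_full _; rewrite -[X in (X <= _)%MS]mul1mx.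
apply: submx_trans (submxMr _ f_full) _; rewrite sumsmxMr.
apply/sumsmx_subP => i _; rewrite (eqmxMr _ (genmxE _)) -trmx_mul.
by apply: (sumsmx_sup i) => //; rewrite genmxE.
Qed.

Definition canonical_dual (C : numClosedFieldType) n N (f : 'I_N -> 'cV[C]_n) i :=
  invmx (frame_op f) *m f i.

Section Duals.
Variables (C : numClosedFieldType) (n N : nat) (f : 'I_N -> 'cV[C]_n).

Lemma sum_canonical_dual_outer :
  (1%:M <= span_of f setT)%MS -> \sum_i canonical_dual f i *m adjmx (f i) = 1%:M.
Proof.
move=> f_full; under eq_bigr do rewrite -mulmxA.
by rewrite -mulmx_sumr -frame_opE mulVmx ?frame_op_unit.
Qed.

Lemma sum_outer_canonical_dual :
  (1%:M <= span_of f setT)%MS -> \sum_i f i *m adjmx (canonical_dual f i) = 1%:M.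
Proof.
move=> f_full; under eq_bigr do rewrite adjmxM adjmx_inv adjmx_frame_op mulmxA.
by rewrite -mulmx_suml -frame_opE mulmxV ?frame_op_unit.
Qed.

Lemma canonical_dual_is_dual realcase :
  is_frame realcase f -> is_dual realcase f (canonical_dual f).
Proof.
move=> [f_real f_full]; split; last first.
  move=> x _; rewrite !sum_inner_scale.
  by rewrite sum_canonical_dual_outer ?sum_outer_canonical_dual ?mul1mx.
split; last by apply: span_of_mull; rewrite ?unitmx_inv ?frame_op_unit.
move=> i rc; have fr l : f l \is a realmx by apply/in_space_realmx/f_real.
by apply/in_space_realmx; rewrite mxOverM ?invmx_realmx ?frame_op_realmx.
Qed.

Lemma sum_outer_dual realcase (g : 'I_N -> 'cV[C]_n) :
  is_dual realcase f g -> \sum_i f i *m adjmx (g i) = 1%:M.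
Proof.
move=> [_ fg]; apply/matrixP => j k.
have dk_real : in_space realcase (delta_mx k 0 : 'cV[C]_n) by move=> _ l; rewrite mxE realn.
have [_ /matrixP/(_ j 0)] := fg _ dk_real.
by rewrite sum_inner_scale -colE !mxE eqxx andbT.
Qed.

End Duals.

Section DisjointSpans.
Variables (C : numClosedFieldType) (n N : nat) (f h : 'I_N -> 'cV[C]_n).

Lemma sum_outer_sub_span (U : {set 'I_N}) :
  ((\sum_(i in U) f i *m adjmx (h i))^T <= span_of f U)%MS.
Proof.
rewrite linear_sum; apply: summx_sub => i iU; rewrite /= trmx_mul.
by apply: submx_trans (submxMl _ _) _; apply: (sumsmx_sup i) => //; rewrite genmxE.
Qed.

Lemma sum_outer_on_eq0 (U : {set 'I_N}) :
  (span_of f U :&: span_of f (~: U) == (0 : 'M[C]_n))%MS ->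
  \sum_i f i *m adjmx (h i) = 0 -> \sum_(i in U) f i *m adjmx (h i) = 0.
Proof.
move=> /andP[capU0 _] sum0; apply/eqP; rewrite -trmx_eq0 -submx0.
apply: submx_trans capU0; rewrite sub_capmx.
rewrite sum_outer_sub_span /=.
have sumUC : \sum_(i in U) f i *m adjmx (h i) + \sum_(i in ~: U) f i *m adjmx (h i) = 0.
  rewrite -[RHS]sum0 [RHS](bigID (mem U)) /=; congr (_ + _).
  by apply: eq_bigl => i; rewrite in_setC.
have -> : \sum_(i in U) f i *m adjmx (h i) = - \sum_(i in ~: U) f i *m adjmx (h i).
  by apply/eqP; rewrite -addr_eq0 sumUC.
by rewrite linearN /= eqmx_opp sum_outer_sub_span.
Qed.

End DisjointSpans.

Lemma dual_inner_sum_on (C : numClosedFieldType) n N (f g g' : 'I_N -> 'cV[C]_n)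
    (U : {set 'I_N}) :
  (span_of f U :&: span_of f (~: U) == (0 : 'M[C]_n))%MS ->
  \sum_i f i *m adjmx (g i) = 1%:M -> \sum_i f i *m adjmx (g' i) = 1%:M ->
  \sum_(i in U) inner (g' i) (f i) = \sum_(i in U) inner (g i) (f i).
Proof.
move=> capU0 fg fg'; pose h i := g' i - g i.
have : \sum_i f i *m adjmx (h i) = 0.
  by under eq_bigr do rewrite adjmxB mulmxBr; rewrite sumrB fg fg' subrr.
move=> /(sum_outer_on_eq0 capU0)/(congr1 mxtrace).
rewrite mxtrace0 raddf_sum => /(congr1 Num.conj); rewrite conjC0 rmorph_sum /=.
under eq_bigr do rewrite mxtrace_outer inner_conj innerBl.
by rewrite sumrB => /eqP; rewrite subr_eq0 => /eqP.
Qed.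

Lemma weight_ge0 (C : numClosedFieldType) n N (p : 'I_N -> C) i :
  (0 < n)%N -> prob_seq p -> 0 <= weight n p i.
Proof.
move=> n0 [p01 p1]; have N0 : (0 < N)%N := leq_ltn_trans (leq0n i) (ltn_ord i).
rewrite /weight p1 mulr_ge0 ?divr_ge0 ?subr_ge0 ?ler1n //.
by case/andP: (p01 i).
Qed.

Lemma R1pE (C : numClosedFieldType) n N (p : 'I_N -> C) (f g : 'I_N -> 'cV[C]_n) :
  R1p p f g = \big[Num.max/0]_(i < N) `|weight n p i * inner (g i) (f i)|.
Proof. by apply: eq_bigr => i _; rewrite synthesis_Dmat_analysis spec_rad_rank1. Qed.

Lemma inner_mul_selfadj (C : numClosedFieldType) n (T : 'M[C]_n) (x y : 'cV[C]_n) :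
  adjmx T = T -> inner (T *m x) (T *m y) = inner (T *m T *m x) y.
Proof. by move=> Tadj; rewrite /inner adjmxM Tadj !mulmxA. Qed.


Theorem proposition3p2 (C : numClosedFieldType) (realcase : bool) (n N : nat)
    (f : 'I_N -> 'cV[C]_n) (p : 'I_N -> C) (T : 'M[C]_n) :
  (0 < n)%N -> (n <= N)%N ->
  is_frame realcase f ->
  prob_seq p ->
  (forall i, \sum_j p j - p i != 0) ->
  is_pos_sqrt T (invmx (frame_op f)) ->
  let v := fun i => weight n p i * inner (T *m f i) (T *m f i) in
  let c := \big[Num.max/0]_(i < N) v i in
  let U1 := [set i | v i == c] in
  let U2 := ~: U1 in
  (span_of f U1 :&: span_of f U2 == (0 : 'M[C]_n))%MS ->
  prob_spec_opt_dual realcase p f (fun i => invmx (frame_op f) *m f i).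
Proof.
move=> n0 _ f_frame p_prob _ [Tadj [_ TT]] v c U1 U2 capU1.
have q0 i : 0 <= weight n p i by apply: weight_ge0.
have vE i : v i = weight n p i * inner (canonical_dual f i) (f i).
  by rewrite /v inner_mul_selfadj // TT.
have w0 i : 0 <= inner (canonical_dual f i) (f i).
  by rewrite /canonical_dual -TT -inner_mul_selfadj // inner_ge0.
have v0 i : 0 <= v i by rewrite vE mulr_ge0.
split; first exact: canonical_dual_is_dual.
move=> g' /sum_outer_dual fg'.
have -> : R1p p f (canonical_dual f) = c.
  by rewrite R1pE; apply: eq_bigr => i _; rewrite -vE ger0_norm.
have c0 : 0 <= c := bigmax_nneg_ge0 v0 _.
have [->|c_neq0] := eqVneq c 0; first by rewrite R1pE bigmax_nneg_ge0.
have [/eqP|[k _ ck]] := bigmax_nneg_attained v0 (index_enum 'I_N).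
  by rewrite (negbTE c_neq0).
have kU1 : k \in U1 by rewrite inE -ck.
have sumU1 := dual_inner_sum_on capU1 (sum_outer_canonical_dual f_frame.2) fg'.
have [||i _ hi] := exists_weighted_norm_ge (c := c) kU1 _ q0 w0 _ sumU1.
- by rewrite lt_def c_neq0 c0.
- by move=> i; rewrite inE -vE => /eqP.
have := le_bigmax_nneg (fun j => normr_ge0 (weight n p j * inner (g' j) (f j)))
  (mem_index_enum i).
by rewrite -R1pE normrM ger0_norm //; apply: le_trans.
Qed.
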